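(* Let $G$ be a compact subgroup of $\operatorname{O}(3)$. Let $L_i$ ($i\ge1$) and $L$ be $n$-component links in $\mathbb{R}^3$, each given by a locally constant-speed parametrization $S^1\sqcup\cdots\sqcup S^1\to\mathbb{R}^3$ of the disjoint union of $n$ unit circles, and suppose $L_i\to L$ in the $C^1$ metric. If each $L_i$ is $G$-invariant, then $L$ is $G$-invariant; if each $L_i$ is oriented $G$-invariant, then $L$ is oriented $G$-invariant.
   Context: $G\subset\operatorname{O}(3)$ acts linearly on $\mathbb{R}^3$. A link $L$ is $G$-invariant if $g(\operatorname{Image}L)=\operatorname{Image}L$ for all $g\in G$. Equivalently (since isometries preserve speed), for each $g\in G$ there is $\hat g$ in the isometry group $\operatorname{O}(2)^n\rtimes S_n$ of $S^1\sqcup\cdots\sqcup S^1$ (acting by $(\gamma_1,\dots,\gamma_n,p)(\phi,i)=(\gamma_i(\phi),p(i))$) with $g\circ L=L\circ\hat g$. $L$ is oriented $G$-invariant if for every $g\in G$ such a $\hat g$ can be taken in $\operatorname{SO}(2)^n\rtimes S_n$, i.e. $g$ maps each component orientation-preservingly onto a component. *)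

From HB Require Import structures.
From mathcomp Require Import all_boot all_order all_algebra all_fingroup.
From mathcomp Require Import all_classical all_reals all_analysis.
Set Implicit Arguments. Unset Strict Implicit. Unset Printing Implicit Defensive.
Import Order.TTheory GRing.Theory Num.Theory.
Import numFieldNormedType.Exports.
Local Open Scope classical_set_scope.
Local Open Scope ring_scope.

Section Defs.
Variable R : realType.

Definition enorm (v : 'cV[R]_3) : R := Num.sqrt (\sum_(j < 3) (v j ord0) ^+ 2).

(* A (parametrized) n-component link: component i, angle phi (the unit circle
   S^1 = R / 2piZ, parametrized by arc length phi). *)
Definition paramlink (n : nat) := 'I_n -> R -> 'cV[R]_3.

Definition vel (f : R -> 'cV[R]_3) (t : R) : 'cV[R]_3 :=
  \col_(j < 3) derive1 (fun s => f s j ord0) t.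

Definition C1_curve (f : R -> 'cV[R]_3) : Prop :=
  forall j : 'I_3, (forall t, derivable (fun s => f s j ord0) t 1) /\
     continuous (derive1 (fun s => f s j ord0)).

Definition is_link (n : nat) (L : paramlink n) : Prop :=
  [/\ forall i t, L i (t + 2 * pi) = L i t,
      forall i, C1_curve (L i),
      forall i j s t, L i s = L j t -> i = j /\ exists k : int, t = s + k%:~R * (2 * pi)
    & forall i, exists c : R, forall t, enorm (vel (L i) t) = c].

Definition C1_converges (n : nat) (Ls : nat -> paramlink n) (L : paramlink n) : Prop :=
  forall e : R, 0 < e -> exists N : nat, forall k, (N <= k)%N ->
    forall i t, enorm (Ls k i t - L i t) + enorm (vel (Ls k i) t - vel (L i) t) <= e.

Definition orth3 (g : 'M[R]_3) : Prop := g^T *m g = 1%:M.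

Definition compact_subgroup_O3 (G : set 'M[R]_3) : Prop :=
  [/\ G `<=` orth3, G 1%:M,
      forall g h, G g -> G h -> G (g *m h),
      forall g, G g -> G (invmx g)
    & compact G].

Definition link_image (n : nat) (L : paramlink n) : set 'cV[R]_3 :=
  [set x | exists i t, x = L i t].

Definition G_invariant (G : set 'M[R]_3) (n : nat) (L : paramlink n) : Prop :=
  forall g, G g -> (fun x => g *m x) @` link_image L = link_image L.

(* oriented G-invariant: for each g in G there is hat g in SO(2)^n x| S_n,
   (theta_1..theta_n, p)(phi, i) = (phi + theta_i, p i), with g o L = L o hat g *)
Definition oriented_G_invariant (G : set 'M[R]_3) (n : nat) (L : paramlink n) : Prop :=
  forall g, G g -> exists (p : {perm 'I_n}) (theta : 'I_n -> R),
    forall i t, g *m L i t = L (p i) (t + theta i).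

End Defs.

From HB Require Import structures.
From mathcomp Require Import all_boot all_order all_algebra all_fingroup.
From mathcomp Require Import all_classical all_reals all_analysis.
From mathcomp Require Import lra.
Import Order.TTheory GRing.Theory Num.Theory.
Import numFieldNormedType.Exports.
Local Open Scope classical_set_scope.
Local Open Scope ring_scope.

(* Fix g in G and a point x = L i t.  For
   each k the point g (L_k i t) lies on L_k, say at L_k j_k s_k with s_k in
   [0, 2 pi] by periodicity.  Some component q occurs as j_k infinitely often,
   and along those k the bounded parameters s_k have a cluster point c; passing
   to the limit, g x = L q c.  This gives g(Image L) in Image L for all g in G,
   and equality by applying it to g^-1.  In the oriented case the shifts
   theta_k(i) are reduced to [0, 2 pi] in the same way; a permutation occurring
   infinitely often and cluster points of the shifts along it give the
   limiting pair (p, theta). *)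

Definition infinitely_often (S : nat -> Prop) : Prop :=
  forall N, exists2 k, (N <= k)%N & S k.

Lemma finite_infinitely_often {T : finType} (p : nat -> T) :
  exists q, infinitely_often (fun k => p k = q).
Proof.
apply: contrapT => none.
have /choice [N hN] : forall q, exists N, forall k, (N <= k)%N -> p k <> q.
  move=> q; apply: contrapT => often; apply: none; exists q => M.
  apply: contrapT => never; apply: often; exists M => k hk pkq.
  by apply: never; exists k.
by apply: (hN (p (\max_q N q)) (\max_q N q)) => //; apply: leq_bigmax.
Qed.

Section ClusterPoints.
Context {R : realType}.

Definition cluster_along (S : nat -> Prop) (a : nat -> R) (c : R) : Prop :=
  forall e, 0 < e -> forall N, exists k, [/\ (N <= k)%N, S k & `|a k - c| < e].

(* The cluster point is the limit superior of a along S. *)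
Lemma bounded_cluster_along {S : nat -> Prop} {a : nat -> R} (M : R) :
  infinitely_often S -> (forall k, 0 <= a k <= M) ->
  exists c, cluster_along S a c.
Proof.
move=> oftS a_bnd.
pose T := [set x : R | forall N, exists k, [/\ (N <= k)%N, S k & x <= a k]].
have supT : has_sup T.
  split.
    exists 0 => N; have [k kN Sk] := oftS N.
    by exists k; split => //; case/andP: (a_bnd k).
  exists M => x Tx; have [k [_ _ xk]] := Tx 0%N.
  by apply: le_trans xk _; case/andP: (a_bnd k).
exists (sup T) => e e0 N.
have e20 : 0 < e / 2 by rewrite divr_gt0.
have [x Tx sup_lt_x] := sup_adherent e20 supT.
have [N0 ev_below] : exists N0, forall k, (N0 <= k)%N -> S k -> a k < sup T + e / 2.
  apply: contrapT => not_below.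
  suff /(sup_upper_bound supT) /= : T (sup T + e / 2) by lra.
  move=> N1; apply: contrapT => hk; apply: not_below; exists N1 => k hk1 Sk.
  by rewrite ltNge; apply/negP => hle; apply: hk; exists k.
have [k [hk Sk xk]] := Tx (maxn N N0).
have := ev_below k (leq_trans (leq_maxr _ _) hk) Sk.
exists k; split => //; first exact: leq_trans (leq_maxl _ _) hk.
by rewrite ltr_norml; apply/andP; split; lra.
Qed.

Lemma uniform_limit_at_cluster (fs : nat -> R -> R) {f : R -> R}
    {S : nat -> Prop} {s : nat -> R} {c y : R} :
  (forall e, 0 < e -> exists N, forall k, (N <= k)%N -> forall t, `|fs k t - f t| <= e) ->
  {for c, continuous f} -> cluster_along S s c ->
  (forall e, 0 < e -> exists N, forall k, (N <= k)%N -> S k -> `|y - fs k (s k)| <= e) ->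
  y = f c.
Proof.
move=> fs_unif f_cont s_clus fs_y.
apply/eqP; rewrite -subr_eq0 -normr_le0; apply/ler_addgt0Pr => e e0.
rewrite add0r; have e3 : 0 < e / 3 by rewrite divr_gt0.
have [N1 hN1] := fs_y _ e3.
have [N2 hN2] := fs_unif _ e3.
move/cvgrPdist_lt: f_cont => /(_ _ e3) /nbhs_ballP [d d0 near_c].
have [k [hk Sk skc]] := s_clus _ d0 (maxn N1 N2).
have y_fs := hN1 k (leq_trans (leq_maxl _ _) hk) Sk.
have fs_f := hN2 k (leq_trans (leq_maxr _ _) hk) (s k).
have f_fc : `|f c - f (s k)| < e / 3.
  by apply: near_c; rewrite /ball /= distrC.
have := ler_distD (fs k (s k)) y (f c).
have := ler_distD (f (s k)) (fs k (s k)) (f c).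
rewrite [`|f (s k) - f c|]distrC; lra.
Qed.

End ClusterPoints.

Lemma periodic_reduce {R : realType} {V : Type} {f : R -> V} {a : R} :
  0 < a -> (forall x, f (x + a) = f x) ->
  forall s, exists s', [/\ 0 <= s', s' <= a & forall x, f (x + s) = f (x + s')].
Proof.
move=> a0 fa s.
have fza (z : int) x : f (x + z%:~R * a) = f x.
  have fna (m : nat) y : f (y + m%:R * a) = f y.
    elim: m y => [|m IH] y; first by rewrite mul0r addr0.
    by rewrite -natr1 mulrDl mul1r addrA fa IH.
  case: z => m; first exact: fna.
  by rewrite NegzE mulrNz mulNr -[in RHS](subrK (m.+1%:R * a) x) -(fna m.+1 (x - _)).
set z := Num.floor (s / a).
exists (s - z%:~R * a); split.
- by rewrite subr_ge0 -ler_pdivlMr // floor_le.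
- rewrite lerBlDl -[X in _ <= _ + X]mul1r -mulrDl -ler_pdivrMr //.
  by have /andP[_ /ltW] := floor_itv (s / a); rewrite intrD.
- by move=> x; rewrite -(fza z (x + (s - _))) -addrA subrK.
Qed.

Section MatrixBounds.
Context {R : realType}.

Lemma enorm_ge0 (v : 'cV[R]_3) : 0 <= enorm v.
Proof. exact: sqrtr_ge0. Qed.

Lemma coord_le_enorm (v : 'cV[R]_3) m : `|v m ord0| <= enorm v.
Proof.
rewrite /enorm -sqrtr_sqr ler_sqrt; last by apply: sumr_ge0 => j _; exact: sqr_ge0.
by rewrite (bigD1 m) //= lerDl; apply: sumr_ge0 => j _; exact: sqr_ge0.
Qed.

Lemma mulmx_coord_le (A : 'M[R]_3) (v : 'cV[R]_3) m :
  `|(A *m v) m ord0| <= (\sum_l `|A m l|) * enorm v.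
Proof.
rewrite mxE mulr_suml; apply: le_trans (ler_norm_sum _ _ _) _.
apply: ler_sum => l _; rewrite normrM; apply: ler_wpM2l => //.
exact: coord_le_enorm.
Qed.

End MatrixBounds.

Lemma two_pi_gt0 {R : realType} : 0 < 2 * pi :> R.
Proof. by rewrite mulr_gt0 // pi_gt0. Qed.

Section LimitLink.
Context {R : realType} {n : nat} {Ls : nat -> paramlink R n} {L : paramlink R n}.
Hypothesis Ls_periodic : forall k i x, Ls k i (x + 2 * pi) = Ls k i x.
Hypothesis L_continuous : forall i t m, {for t, continuous (fun s => L i s m ord0)}.
Hypothesis Ls_cvg : C1_converges Ls L.

Lemma C1_converges_mulmx (A : 'M[R]_3) {e} : 0 < e ->
  exists N, forall k, (N <= k)%N -> forall i t m,
    `|(A *m Ls k i t) m ord0 - (A *m L i t) m ord0| <= e.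
Proof.
move=> e0; set K := \sum_m \sum_l `|A m l|.
have K0 : 0 < K + 1 by rewrite ltr_wpDl // sumr_ge0 // => m _; rewrite sumr_ge0.
have [N hN] := Ls_cvg _ (divr_gt0 e0 K0).
exists N => k hk i t m.
have diff_le := hN k hk i t.
have vel_ge0 := enorm_ge0 (vel (Ls k i) t - vel (L i) t).
have rowA_le : \sum_l `|A m l| <= K.
  by rewrite /K [X in _ <= X](bigD1 m) //= lerDl sumr_ge0 // => m' _; rewrite sumr_ge0.
have -> : (A *m Ls k i t) m ord0 - (A *m L i t) m ord0 =
    (A *m (Ls k i t - L i t)) m ord0 by rewrite mulmxBr !mxE.
apply: le_trans (mulmx_coord_le _ _ _) _.
have dpos := enorm_ge0 (Ls k i t - L i t).
apply: (@le_trans _ _ ((K + 1) * enorm (Ls k i t - L i t))).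
  by apply: ler_wpM2r => //; lra.
by rewrite -ler_pdivlMl // mulrC; lra.
Qed.

Lemma mulmx_limit_on_link {g : 'M[R]_3} {i t q} {S : nat -> Prop} {s : nat -> R} {c} :
  (forall k, S k -> Ls k q (s k) = g *m Ls k i t) -> cluster_along S s c ->
  g *m L i t = L q c.
Proof.
move=> on_Ls s_clus; apply/matrixP => m l; rewrite (ord1 l) {l}.
apply: (uniform_limit_at_cluster (fun k u => Ls k q u m ord0) _
          (L_continuous q c m) s_clus).
  move=> e e0; have [N hN] := C1_converges_mulmx 1 e0.
  by exists N => k hk u; have := hN k hk q u m; rewrite !mul1mx.
move=> e e0; have [N hN] := C1_converges_mulmx g e0.
by exists N => k hk Sk; rewrite /= on_Ls // distrC; apply: hN.
Qed.

Lemma image_mulmx_limit (g : 'M[R]_3) :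
  (forall k, (fun x => g *m x) @` link_image (Ls k) `<=` link_image (Ls k)) ->
  (fun x => g *m x) @` link_image L `<=` link_image L.
Proof.
move=> g_Ls _ [_ [i [t ->]] <-].
have /choice [js hjs] : forall k, exists js : 'I_n * R,
    [/\ 0 <= js.2, js.2 <= 2 * pi & Ls k js.1 js.2 = g *m Ls k i t].
  move=> k; have [j [s ->]] : link_image (Ls k) (g *m Ls k i t).
    by apply: g_Ls; exists (Ls k i t) => //; exists i, t.
  have [s' [s0 s1 hs']] := periodic_reduce two_pi_gt0 (Ls_periodic k j) s.
  by exists (j, s'); split => //=; have := hs' 0; rewrite !add0r.
have [q oftq] := finite_infinitely_often (fun k => (js k).1).
have [c clus] : exists c, cluster_along (fun k => (js k).1 = q) (fun k => (js k).2) c.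
  by apply: (bounded_cluster_along (2 * pi) oftq) => k; case: (hjs k) => *; apply/andP.
exists q, c; apply: (mulmx_limit_on_link _ clus) => k <-.
by case: (hjs k).
Qed.

Lemma oriented_mulmx_limit (g : 'M[R]_3) :
  (forall k, exists (p : {perm 'I_n}) (theta : 'I_n -> R),
     forall i t, g *m Ls k i t = Ls k (p i) (t + theta i)) ->
  exists (p : {perm 'I_n}) (theta : 'I_n -> R),
    forall i t, g *m L i t = L (p i) (t + theta i).
Proof.
move=> g_Ls.
have /choice [pk hpk] : forall k, exists pth : {perm 'I_n} * ('I_n -> R),
    forall i t, g *m Ls k i t = Ls k (pth.1 i) (t + pth.2 i).
  by move=> k; have [p [th h]] := g_Ls k; exists (p, th).
have /choice [th hth] : forall ki : nat * 'I_n, exists th' : R,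
    [/\ 0 <= th', th' <= 2 * pi & forall x,
      Ls ki.1 ((pk ki.1).1 ki.2) (x + (pk ki.1).2 ki.2) =
      Ls ki.1 ((pk ki.1).1 ki.2) (x + th')].
  by move=> [k i] /=; apply: (periodic_reduce two_pi_gt0 (Ls_periodic _ _)).
have [p oftp] := finite_infinitely_often (fun k => (pk k).1).
pose S k := (pk k).1 = p.
have /choice [theta clus] : forall i, exists c, cluster_along S (fun k => th (k, i)) c.
  move=> i; apply: (bounded_cluster_along (2 * pi) oftp) => k.
  by case: (hth (k, i)) => *; apply/andP.
exists p, theta => i t.
apply: (mulmx_limit_on_link (S := S) (s := fun k => t + th (k, i))).
  by move=> k Sk; rewrite hpk; case: (hth (k, i)) => _ _ /= ->; rewrite Sk.
move=> e e0 N; have [k [hk Sk close]] := clus i e e0 N.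
by exists k; split => //; rewrite opprD addrACA subrr add0r.
Qed.

End LimitLink.

Theorem lemma3p3 (R : realType) (G : set 'M[R]_3) (n : nat)
    (Ls : nat -> paramlink R n) (L : paramlink R n) :
  compact_subgroup_O3 G ->
  (forall k, is_link (Ls k)) -> is_link L ->
  C1_converges Ls L ->
  ((forall k, G_invariant G (Ls k)) -> G_invariant G L) /\
  ((forall k, oriented_G_invariant G (Ls k)) -> oriented_G_invariant G L).
Proof.
move=> [G_orth _ _ G_inv _] Ls_link [_ L_C1 _ _] Ls_cvg.
have Ls_periodic k : forall i x, Ls k i (x + 2 * pi) = Ls k i x.
  by case: (Ls_link k).
have L_continuous i t m : {for t, continuous (fun s => L i s m ord0)}.
  have [L_der _] := L_C1 i m.
  by apply: differentiable_continuous; apply/derivable1_diffP.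
split=> [Ls_inv g Gg | Ls_or g Gg].
- have image_le h : G h -> (fun x => h *m x) @` link_image L `<=` link_image L.
    move=> Gh; apply: (image_mulmx_limit Ls_periodic L_continuous Ls_cvg) => k.
    by rewrite (Ls_inv k h Gh).
  apply/seteqP; split; first exact: image_le.
  have g_unit : g \in unitmx by case: (mulmx1_unit (G_orth g Gg)).
  move=> x Lx; exists (invmx g *m x); first by apply: image_le (G_inv g Gg) _ _; exists x.
  by rewrite mulmxA mulmxV // mul1mx.
- by apply: (oriented_mulmx_limit Ls_periodic L_continuous Ls_cvg) => k; apply: Ls_or.
Qed.
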